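(* Let $n=2k$ and $\tau$ be positive integers with $1\le\tau\le k$. Let $u_1,\ldots,u_k$ be pairwise distinct elements of $\mathbb{F}_{2^n}$ such that $u_iu_j^{2^k}\in\mathbb{F}_{2^k}^*$ for all $1\le i<j\le k$. Let $F(X_1,\ldots,X_\tau)$ be a reduced polynomial in $\mathbb{F}_2[X_1,\ldots,X_\tau]$ of algebraic degree $d\ge0$, and let $\{i_1,\ldots,i_\tau\}\subseteq\{1,\ldots,k\}$. Then $H(x)=x^{2^k+1}+F(\mathrm{Tr}^n_1(u_{i_1}x),\ldots,\mathrm{Tr}^n_1(u_{i_\tau}x))$ is a vectorial bent $(n,k)$-function. Furthermore, if $u_{i_1},\ldots,u_{i_\tau}$ are linearly independent over $\mathbb{F}_2$ and $d\ge2$, then the algebraic degree of $H$ equals $d$.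
   Context: $\mathrm{Tr}^n_1(x)=\sum_{i=0}^{n-1}x^{2^i}$. $x^{2^k+1}$ takes values in $\mathbb{F}_{2^k}$, so $H:\mathbb{F}_{2^n}\to\mathbb{F}_{2^k}$ (the $F$-term lies in $\mathbb{F}_2$). An $(n,k)$-function $H$ is vectorial bent if every component $\mathrm{Tr}^k_1(\lambda H(x))$, $\lambda\in\mathbb{F}_{2^k}^*$, is a bent Boolean function (i.e. $|\sum_x(-1)^{f(x)+\mathrm{Tr}^n_1(ax)}|=2^{n/2}$ for all $a$). A reduced polynomial is a multilinear polynomial over $\mathbb{F}_2$; its algebraic degree is the largest size of a monomial with nonzero coefficient. The algebraic degree of a vectorial function is the maximum algebraic degree of its coordinate Boolean functions (written as reduced multivariate polynomials over $\mathbb{F}_2$ after identifying $\mathbb{F}_{2^n}$ with $\mathbb{F}_2^n$). *)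

From HB Require Import structures.
From mathcomp Require Import all_boot all_order all_algebra all_field.
From mathcomp Require Import mpoly.
Set Implicit Arguments. Unset Strict Implicit. Unset Printing Implicit Defensive.
Import Order.TTheory GRing.Theory Num.Theory.
Local Open Scope ring_scope.

Definition Tr (L : finFieldType) (m : nat) (x : L) : L :=
  \sum_(i < m) x ^+ (2 ^ i).

Definition inFk (L : finFieldType) (k : nat) (y : L) : bool := y ^+ (2 ^ k) == y.

Definition L2F (L : finFieldType) (y : L) : 'F_2 := if y == 0 then 0 else 1.
Definition F2L (L : finFieldType) (c : 'F_2) : L := if c == 0 then 0 else 1.

Definition sgnL (L : finFieldType) (y : L) : int := if y == 0 then 1 else -1.

(* Bent Boolean function on L = F_{2^n}, n = 2k (so 2^{n/2} = 2^k). *)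
Definition bent (L : finFieldType) (n k : nat) (f : L -> L) : Prop :=
  (forall x, (f x == 0) || (f x == 1)) /\
  forall a : L, `| \sum_(x : L) sgnL (f x + Tr n (a * x)) | = (2 ^ k)%:R :> int.

Definition vbent (L : finFieldType) (n k : nat) (H : L -> L) : Prop :=
  (forall x, inFk k (H x)) /\
  forall lam : L, inFk k lam -> lam != 0 -> bent n k (fun x => Tr k (lam * H x)).

Definition reduced (m : nat) (P : {mpoly 'F_2[m]}) : Prop :=
  forall mo, mo \in msupp P -> forall i, (mo i <= 1)%N.
(* largest size of a monomial with nonzero coefficient (0 for P = 0) *)
Definition anf_deg (m : nat) (P : {mpoly 'F_2[m]}) : nat := (msize P).-1.

Definition bool_algdeg (m : nat) (f : 'rV['F_2]_m -> 'F_2) (d : nat) : Prop :=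
  exists P : {mpoly 'F_2[m]}, reduced P /\
    (forall x : 'rV['F_2]_m, P.@[fun i => x ord0 i] = f x) /\ anf_deg P = d.

(* Algebraic degree of H : F_{2^n} -> F_{2^k} equals d, for every identification
   of F_{2^n} with F_2^n (an additive, i.e. F_2-linear, bijection phi) and of
   F_{2^k} with F_2^k (an additive map psi bijective from F_{2^k} onto F_2^k):
   the max of the degrees of the coordinate Boolean functions is d. *)
Definition vec_algdeg (L : finFieldType) (n k : nat) (H : L -> L) (d : nat) : Prop :=
  forall (phi : 'rV['F_2]_n -> L) (psi : L -> 'rV['F_2]_k),
    {morph phi : a b / a + b} -> bijective phi ->
    {morph psi : a b / a + b} -> {in inFk k &, injective psi} ->
    (forall v, exists2 y, inFk k y & psi y = v) ->
    exists D : 'I_k -> nat,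
      (forall j, bool_algdeg (fun x => psi (H (phi x)) ord0 j) (D j)) /\
      \max_(j < k) D j = d.

Definition F2_lin_indep (L : finFieldType) (t : nat) (w : 'I_t -> L) : Prop :=
  forall S : {set 'I_t}, \sum_(j in S) w j = 0 -> S = set0.

Definition Hfun (L : finFieldType) (n k tau : nat) (u : 'I_k -> L)
  (idx : 'I_tau -> 'I_k) (F : {mpoly 'F_2[tau]}) (x : L) : L :=
  x ^+ (2 ^ k + 1) + F2L L (F.@[fun j => L2F (Tr n (u (idx j) * x))]).

From HB Require Import structures.
From mathcomp Require Import all_boot all_order all_algebra all_field.
From mathcomp Require Import mpoly.
From mathcomp Require Import ring.
Import Order.TTheory GRing.Theory Num.Theory.
Local Open Scope ring_scope.
Set Implicit Arguments. Unset Strict Implicit.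

(* Write q = 2^k and N(x) = x^(q+1), so H = N + F o T with
   T(x) = (Tr(u_{i_j} x))_j.  For a component lam, the quadratic form
   g(x) = Tr_k(lam N(x)) satisfies W_g(b) W_g(b') = 2^n (-1)^(g(e) + Tr(b' e))
   whenever lam e^q = b + b'.  The F-part of the component only depends on the
   set of j with Tr(u_{i_j} x) <> 0; expanding it in the characters of subsets
   writes its Walsh value as a combination of the W_g(a + sum_{j in s} u_{i_j}).
   As the u_i u_j^q lie in F_{2^k}, N is additive on the span of the u's, so the
   sign in the product formula is a product of characters in s and s', and
   Fourier inversion on subsets gives a squared Walsh value of exactly 2^n.

   For the degree, every coordinate of H is a coordinate of N (degree <= 2)
   plus c_j (F o T), where c is the coordinate vector of 1.  Independence of
   the u_{i_j} makes T surjective, so F o T has degree exactly d.  If d > 2 the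
   coordinates with c_j = 1 have degree d; if d = 2 a combination of two
   coordinates eliminates F and is a nonzero linear image of N, whose second
   derivative y^q z + y z^q does not vanish. *)

(** * Characteristic two and the absolute trace *)

Section CharTwoRing.
Variable R : comNzRingType.
Hypothesis pchar2 : 2 \in [pchar R].
Implicit Types x y : R.

Lemma exprD_pow2 m x y : (x + y) ^+ (2 ^ m) = x ^+ (2 ^ m) + y ^+ (2 ^ m).
Proof.
apply: exprDn_pchar; rewrite (eq_pnat _ (pcharf_eq pchar2)).
by rewrite pnatX pnat_id.
Qed.

Lemma expr_pow2_sum m (I : Type) (r : seq I) (P : pred I) (G : I -> R) :
  (\sum_(i <- r | P i) G i) ^+ (2 ^ m) = \sum_(i <- r | P i) G i ^+ (2 ^ m).
Proof.
apply: (big_morph (fun x => x ^+ (2 ^ m))); first exact: exprD_pow2.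
by rewrite expr0n expn_eq0.
Qed.

End CharTwoRing.

Section CharTwo.
Variable L : finFieldType.
Hypothesis pchar2 : 2 \in [pchar L].
Implicit Types x y z : L.

Definition is_bit y := (y == 0) || (y == 1).

Lemma is_bit0 : is_bit 0. Proof. by rewrite /is_bit eqxx. Qed.
Lemma is_bit1 : is_bit 1. Proof. by rewrite /is_bit eqxx orbT. Qed.

Lemma is_bitD y z : is_bit y -> is_bit z -> is_bit (y + z).
Proof.
by case/orP=> /eqP-> /orP[]/eqP->;
  rewrite ?addr0 ?add0r ?addrr_pchar2 ?is_bit0 ?is_bit1.
Qed.

Lemma is_bit_sqr y : y ^+ 2 = y -> is_bit y.
Proof.
move=> yy; have /eqP : y * (y - 1) = 0 by rewrite mulrBr mulr1 -expr2 yy subrr.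
by rewrite mulf_eq0 subr_eq0.
Qed.

Lemma sgnLD y z : is_bit y -> is_bit z -> sgnL (y + z) = sgnL y * sgnL z.
Proof.
rewrite /sgnL; case/orP=> /eqP-> /orP[]/eqP->;
  by rewrite ?addr0 ?add0r ?addrr_pchar2 ?eqxx ?oner_eq0 ?mulr1 ?mul1r ?mulrNN.
Qed.

Lemma sgnL_sum (I : finType) (P : pred I) (T : I -> L) :
  (forall i, is_bit (T i)) ->
  sgnL (\sum_(i | P i) T i) = \prod_(i | P i) sgnL (T i).
Proof.
move=> bitT; suff [] : is_bit (\sum_(i | P i) T i) /\
  sgnL (\sum_(i | P i) T i) = \prod_(i | P i) sgnL (T i) by [].
apply: (big_ind2 (fun y (e : int) => is_bit y /\ sgnL y = e)).
- by rewrite /sgnL eqxx; split; first exact: is_bit0.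
- by move=> y1 e1 y2 e2 [b1 <-] [b2 <-]; split; [apply: is_bitD | apply: sgnLD].
- by move=> i _; split.
Qed.

Lemma L2FD y z : is_bit y -> is_bit z -> L2F (y + z) = L2F y + L2F z.
Proof.
rewrite /L2F; case/orP=> /eqP-> /orP[]/eqP->;
  by rewrite ?addr0 ?add0r ?addrr_pchar2 ?eqxx ?oner_eq0 //; apply: val_inj.
Qed.

Lemma TrD m x y : Tr m (x + y) = Tr m x + Tr m y.
Proof. by rewrite /Tr -big_split; apply: eq_bigr => i _; rewrite exprD_pow2. Qed.

Lemma Tr0 m : Tr m (0 : L) = 0.
Proof. by rewrite /Tr big1 // => i _; rewrite expr0n expn_eq0. Qed.

Lemma Tr_sum m (I : Type) (r : seq I) (P : pred I) (G : I -> L) :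
  Tr m (\sum_(i <- r | P i) G i) = \sum_(i <- r | P i) Tr m (G i).
Proof. by apply: (big_morph (Tr m)); [apply: TrD | apply: Tr0]. Qed.

Lemma Tr_addn m m' y : Tr (m + m') y = Tr m y + Tr m' (y ^+ (2 ^ m)).
Proof.
by rewrite /Tr big_split_ord; congr (_ + _); apply: eq_bigr => i _;
  rewrite -exprM -expnD.
Qed.

Lemma Tr1 y : Tr 1 y = y.
Proof. by rewrite /Tr big_ord1 expr1. Qed.

Lemma Tr_sqr m y : Tr m (y ^+ 2) = Tr m y ^+ 2.
Proof.
rewrite /Tr -[2%N]/(2 ^ 1)%N expr_pow2_sum //.
by apply: eq_bigr => i _; rewrite -!exprM mulnC.
Qed.

Lemma Tr_bit m y : y ^+ (2 ^ m) = y -> is_bit (Tr m y).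
Proof.
move=> yFix; apply: is_bit_sqr.
have := Tr_addn m 1 y; rewrite addnC Tr_addn !Tr1 yFix Tr_sqr => /(congr1 (+%R y)).
rewrite !addrA (addrr_pchar2 pchar2) add0r [y + _]addrC -addrA.
by rewrite (addrr_pchar2 pchar2) addr0.
Qed.

End CharTwo.

Lemma exists_nonroot (R : finIdomainType) (p : {poly R}) :
  p != 0 -> (size p <= #|R|)%N -> exists y, ~~ root p y.
Proof.
move=> p0 size_p; apply/existsP; apply: contraTT size_p.
rewrite negb_exists -ltnNge cardE => /forallP allroots.
apply: (max_poly_roots p0); rewrite ?enum_uniq //.
by apply/allP => y _; apply/negPn/allroots.
Qed.

Section FieldOfOrderPow2.
Variables (L : finFieldType) (n : nat).
Hypothesis cardL : #|L| = (2 ^ n)%N.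

Let n_gt0 : (0 < n)%N.
Proof. by have := card_finNzRing_gt1 L; rewrite cardL; case: n. Qed.

Lemma pchar2_card : 2 \in [pchar L].
Proof. exact: card_finPcharP cardL _. Qed.

Lemma expr_pow2_card (x : L) : x ^+ (2 ^ n) = x.
Proof. by rewrite -cardL expf_card. Qed.

Lemma Tr_card_bit (y : L) : is_bit (Tr n y).
Proof. exact/Tr_bit/expr_pow2_card/pchar2_card. Qed.

Lemma Tr_neq0 : exists y : L, Tr n y != 0.
Proof.
pose p : {poly L} := \sum_(i < n) 'X^(2 ^ i).
have pE y : p.[y] = Tr n y.
  by rewrite horner_sum; apply: eq_bigr => i _; rewrite hornerXn.
have p_coef1 : p`_1 = 1.
  rewrite coef_sum (bigD1 (Ordinal n_gt0)) //= coefXn eqxx big1 ?addr0 // => i.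
  rewrite coefXn eq_sym -val_eqE /= -(eqn_exp2l _ _ (ltnSn 1)) expn0.
  by move/negbTE ->.
have p0 : p != 0 by apply: contra_eq_neq p_coef1 => ->; rewrite coef0 eq_sym oner_neq0.
have size_p : (size p <= #|L|)%N.
  rewrite (leq_trans (size_sum _ _ _)) //; apply/bigmax_leqP => i _.
  by rewrite size_polyXn cardL ltn_exp2l.
by have [y] := exists_nonroot p0 size_p; rewrite /root pE; exists y.
Qed.

Lemma sum_sgnL_Tr (c : L) :
  \sum_(x : L) sgnL (Tr n (c * x)) = if c == 0 then #|L|%:R else 0.
Proof.
have pchar2 := pchar2_card.
have [->|c0] := eqVneq c 0.
  under eq_bigr do rewrite mul0r Tr0 // /sgnL eqxx.
  by rewrite sumr_const.
have [y Try] := Tr_neq0; pose x0 := c^-1 * y.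
have Trx0 : Tr n (c * x0) = 1.
  rewrite /x0 mulrA mulfV // mul1r.
  by case/orP: (Tr_card_bit y) Try => /eqP ->; rewrite ?eqxx.
set S := \sum_x _; have : S = - S.
  rewrite {1}/S (reindex_inj (addIr x0)) /= -sumrN; apply: eq_bigr => x _.
  rewrite mulrDr TrD // Trx0 sgnLD ?Tr_card_bit ?is_bit1 //.
  by rewrite /sgnL oner_eq0 mulrN1.
by move/eqP; rewrite -addr_eq0 -mulr2n mulrn_eq0 => /eqP.
Qed.

End FieldOfOrderPow2.

Section QuadraticExtension.
Variables (L : finFieldType) (k : nat).
Hypothesis cardL : #|L| = (2 ^ (k + k))%N.
Local Notation q := (2 ^ k)%N.
Let pchar2 := pchar2_card cardL.
Implicit Types x y : L.

Lemma exprqK x : (x ^+ q) ^+ q = x.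
Proof. by rewrite -exprM -expnD expr_pow2_card. Qed.

Lemma inFk0 : inFk k (0 : L).
Proof. by rewrite /inFk expr0n expn_eq0. Qed.

Lemma inFk1 : inFk k (1 : L).
Proof. by rewrite /inFk expr1n. Qed.

Lemma inFkD x y : inFk k x -> inFk k y -> inFk k (x + y).
Proof. by move=> /eqP xFix /eqP yFix; rewrite /inFk exprD_pow2 // xFix yFix. Qed.

Lemma inFkM x y : inFk k x -> inFk k y -> inFk k (x * y).
Proof. by move=> /eqP xFix /eqP yFix; rewrite /inFk exprMn xFix yFix. Qed.

Lemma inFkV x : inFk k x -> inFk k x^-1.
Proof. by move=> /eqP xFix; rewrite /inFk exprVn xFix. Qed.

Lemma inFk_sum (I : Type) (r : seq I) (P : pred I) (G : I -> L) :
  (forall i, P i -> inFk k (G i)) -> inFk k (\sum_(i <- r | P i) G i).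
Proof.
by move=> FkG; apply: (big_ind (inFk k)) => //; [exact: inFk0 | exact: inFkD].
Qed.

Lemma inFk_norm x : inFk k (x ^+ (q + 1)).
Proof. by rewrite /inFk -exprM mulnDl mul1n exprD exprM exprqK exprD mulrC. Qed.

Lemma inFk_expq x : inFk k x -> x ^+ q = x.
Proof. exact/eqP. Qed.

Lemma Tr_inFk_bit y : inFk k y -> is_bit (Tr k y).
Proof. by move/eqP; apply: Tr_bit. Qed.

Lemma Tr_inFk y : inFk k y -> Tr (k + k) y = 0.
Proof. by move=> /eqP yFix; rewrite Tr_addn // yFix addrr_pchar2. Qed.

Lemma norm_polar y z :
  (y + z) ^+ (q + 1) + y ^+ (q + 1) + z ^+ (q + 1) = y ^+ q * z + y * z ^+ q.
Proof.
rewrite !exprD !expr1 exprD_pow2 //.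
have -> : (y ^+ q + z ^+ q) * (y + z) + y ^+ q * y + z ^+ q * z =
  y ^+ q * z + y * z ^+ q + (y ^+ q * y + y ^+ q * y) + (z ^+ q * z + z ^+ q * z).
  by ring.
by rewrite !addrr_pchar2 // !addr0.
Qed.

Lemma normD_inFk y z : inFk k (y ^+ q * z) ->
  (y + z) ^+ (q + 1) = y ^+ (q + 1) + z ^+ (q + 1).
Proof.
move=> /eqP cross; have /eqP : (y + z) ^+ (q + 1) + y ^+ (q + 1) + z ^+ (q + 1) = 0.
  by rewrite norm_polar -{2}[y]exprqK -exprMn cross addrr_pchar2.
by rewrite -addrA addr_eq0 oppr_pchar2 // => /eqP.
Qed.

(* Take y with [Tr_{2k}(y) <> 0]: then [t = y^q + y] is a nonzero element of
   F_{2^k}, and [th = y / t] works. *)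
Lemma exists_relTr1 : exists th : L, th ^+ q + th = 1.
Proof.
have [y Try] := Tr_neq0 cardL; pose t := y ^+ q + y.
have t0 : t != 0.
  apply: contraNneq Try => /eqP; rewrite addr_eq0 oppr_pchar2 // => yFix.
  exact/eqP/Tr_inFk.
have tFix : t ^+ q = t by rewrite /t exprD_pow2 // exprqK addrC.
by exists (y / t); rewrite exprMn exprVn tFix -mulrDl -/t mulfV.
Qed.

End QuadraticExtension.

(** * Characters of the group of subsets *)

Section SubsetCharacters.
Variable T : finType.
Implicit Types s Z C : {set T}.

Lemma card_subsets : #|{: {set T}}| = (2 ^ #|T|)%N.
Proof. by rewrite -[LHS]cardsT -powersetT card_powerset cardsT. Qed.

Definition chi s Z : int := \prod_(j in s) (if j \in Z then -1 else 1).

Definition symdiff Z C : {set T} := [set j | (j \in Z) != (j \in C)].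

Lemma chiM s Z C : chi s Z * chi s C = chi s (symdiff Z C).
Proof.
rewrite /chi -big_split; apply: eq_bigr => j _; rewrite inE.
by case: (j \in Z); case: (j \in C); rewrite ?mulrNN ?mulr1 ?mulN1r.
Qed.

Lemma symdiff_eq0 Z C : (symdiff Z C == set0) = (Z == C).
Proof.
apply/eqP/eqP => [/setP ZC | ->]; last by apply/setP => j; rewrite !inE eqxx.
by apply/setP => j; have := ZC j; rewrite !inE; case: (j \in Z); case: (j \in C).
Qed.

Definition toggle (a : T) s := if a \in s then s :\ a else a |: s.

Lemma toggleK a : involutive (toggle a).
Proof.
move=> s; rewrite /toggle; case: (boolP (a \in s)) => a_s.
  by rewrite setD11 setD1K.
by rewrite setU11 setU1K.
Qed.

Lemma chi_toggle a s Z : a \in Z -> chi (toggle a s) Z = - chi s Z.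
Proof.
move=> aZ; rewrite /toggle /chi; case: ifP => a_s.
  by rewrite [in RHS](big_setD1 a) //= aZ mulN1r opprK.
by rewrite big_setU1 /= ?a_s // aZ mulN1r.
Qed.

Lemma sum_chi Z : \sum_s chi s Z = if Z == set0 then (2 ^ #|T|)%:R else 0.
Proof.
have [-> | /set0Pn [a aZ]] := eqVneq Z set0.
  have chi_set0 s : chi s set0 = 1 by rewrite /chi big1 // => j _; rewrite inE.
  by under eq_bigr do rewrite chi_set0; rewrite sumr_const card_subsets.
set S := \sum_s _; have : S = - S.
  rewrite {1}/S (reindex_inj (can_inj (toggleK a))) /= -sumrN.
  by apply: eq_bigr => s _; rewrite chi_toggle.
by move/eqP; rewrite -addr_eq0 -mulr2n mulrn_eq0 => /eqP.
Qed.

Lemma chi_inversion (e : {set T} -> int) C :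
  \sum_s (\sum_Z e Z * chi s Z) * chi s C = (2 ^ #|T|)%:R * e C.
Proof.
under eq_bigr do rewrite mulr_suml.
rewrite exchange_big /=.
under eq_bigr => Z _ do under eq_bigr do rewrite -mulrA chiM.
under eq_bigr => Z _ do rewrite -mulr_sumr sum_chi symdiff_eq0.
rewrite (bigD1 C) //= eqxx big1 => [|Z /negbTE ->]; last by rewrite mulr0.
by rewrite addr0 mulrC.
Qed.

End SubsetCharacters.

(** * Bentness *)

Section NormWalsh.
Variables (L : finFieldType) (k : nat).
Hypothesis cardL : #|L| = (2 ^ (k + k))%N.
Local Notation q := (2 ^ k)%N.
Local Notation Trn := (Tr (k + k)).
Let pchar2 := pchar2_card cardL.
Variable lam : L.
Hypotheses (lam_Fk : inFk k lam) (lam0 : lam != 0).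
Implicit Types x e b : L.

Definition normTr x := Tr k (lam * x ^+ (q + 1)).

Definition walsh_normTr b := \sum_(x : L) sgnL (normTr x + Trn (b * x)).

Lemma normTr_bit x : is_bit (normTr x).
Proof. by apply/Tr_inFk_bit/inFkM/inFk_norm. Qed.

Lemma normTrD x e : normTr (x + e) = normTr x + normTr e + Trn (lam * e ^+ q * x).
Proof.
rewrite /normTr !exprD !expr1 exprD_pow2 // Tr_addn // -!TrD //.
have -> : (lam * e ^+ q * x) ^+ q = lam * x ^+ q * e.
  by rewrite !exprMn (inFk_expq lam_Fk) exprqK // mulrAC.
congr (Tr k _); ring.
Qed.

Lemma walsh_normTr_mul b b' e0 : lam * e0 ^+ q = b + b' ->
  walsh_normTr b * walsh_normTr b' = #|L|%:R * sgnL (normTr e0 + Trn (b' * e0)).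
Proof.
move=> e0_def; have Tr_bit := Tr_card_bit cardL.
have shift x e :
    sgnL (normTr x + Trn (b * x)) * sgnL (normTr (x + e) + Trn (b' * (x + e)))
    = sgnL (normTr e + Trn (b' * e)) * sgnL (Trn ((b + b' + lam * e ^+ q) * x)).
  rewrite -!sgnLD ?is_bitD ?normTr_bit //; congr sgnL.
  rewrite normTrD mulrDr !mulrDl !TrD //.
  set A := normTr x; set B := Trn (b * x); set C := normTr e.
  set D := Trn (_ * x); set E := Trn (b' * x); set F := Trn (b' * e).
  have -> : A + B + (A + C + D + (E + F)) = (A + A) + (C + F + (B + E + D)) by ring.
  by rewrite addrr_pchar2 // add0r.
pose S e := \sum_x sgnL (Trn ((b + b' + lam * e ^+ q) * x)).
have S_e0 : S e0 = #|L|%:R by rewrite /S -e0_def addrr_pchar2 // sum_sgnL_Tr ?eqxx.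
have S_neq e : e != e0 -> S e = 0.
  move=> ee0; rewrite /S sum_sgnL_Tr //; case: eqP => // /eqP.
  rewrite -e0_def addr_eq0 oppr_pchar2 // (inj_eq (mulfI lam0)) => /eqP eqq.
  by rewrite -[e0](exprqK cardL) eqq (exprqK cardL) eqxx in ee0.
rewrite /walsh_normTr mulr_suml.
under eq_bigr => x _ do rewrite mulr_sumr (reindex_inj (addrI x)) /=.
rewrite exchange_big /=.
under eq_bigr => e _ do under eq_bigr => x _ do rewrite shift.
under eq_bigr => e _ do rewrite -mulr_sumr -/(S e).
rewrite (bigD1 e0) //= S_e0 big1 => [|e /S_neq ->]; last by rewrite mulr0.
by rewrite addr0 mulrC.
Qed.

End NormWalsh.

Section TraceSupport.
Variables (L : finFieldType) (n : nat).
Hypothesis cardL : #|L| = (2 ^ n)%N.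
Let pchar2 := pchar2_card cardL.
Variables (t : nat) (v : 'I_t -> L).
Implicit Types (s Z : {set 'I_t}) (x : L).

Definition vsum s := \sum_(j in s) v j.

Definition tr_support x := [set j | Tr n (v j * x) != 0].

Lemma chi_tr_support s x : chi s (tr_support x) = sgnL (Tr n (vsum s * x)).
Proof.
rewrite /vsum mulr_suml Tr_sum // sgnL_sum //; last by move=> j; apply: Tr_card_bit.
by apply: eq_bigr => j _; rewrite inE /sgnL; case: eqP.
Qed.

(* Sum [chi s (tr_support x) * chi s Z] over [x] and [s] in both orders: over
   [s] it vanishes unless [tr_support x = Z]; over [x] only [s = set0] survives,
   since the [v j] are independent, leaving [#|L|]. *)
Lemma tr_support_surj : F2_lin_indep v -> forall Z, exists x, tr_support x = Z.
Proof.
move=> v_indep Z; have [x /eqP | none] := pickP (fun x => tr_support x == Z).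
  by exists x.
pose S := \sum_x \sum_s chi s (tr_support x) * chi s Z.
have S0 : S = 0.
  apply: big1 => x _; under eq_bigr do rewrite chiM.
  by rewrite sum_chi symdiff_eq0 none.
have : S = #|L|%:R.
  rewrite /S exchange_big /= (bigD1 set0) //= [X in _ + X]big1 => [|s s0].
    under eq_bigr do rewrite chi_tr_support mulrC.
    by rewrite -mulr_sumr /vsum big_set0 sum_sgnL_Tr // eqxx /chi big_set0 mul1r addr0.
  under eq_bigr do rewrite chi_tr_support mulrC.
  rewrite -mulr_sumr sum_sgnL_Tr //; case: eqP => [/v_indep s_0|]; last by rewrite mulr0.
  by rewrite s_0 eqxx in s0.
by rewrite S0 cardL => /eqP; rewrite eq_sym pnatr_eq0 expn_eq0.
Qed.

End TraceSupport.

Section TwistedWalsh.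
Variables (L : finFieldType) (k : nat).
Hypothesis cardL : #|L| = (2 ^ (k + k))%N.
Local Notation q := (2 ^ k)%N.
Local Notation Trn := (Tr (k + k)).
Let pchar2 := pchar2_card cardL.
Variable lam : L.
Hypotheses (lam_Fk : inFk k lam) (lam0 : lam != 0).
Variables (t : nat) (v : 'I_t -> L).
Hypothesis v_Fk : forall i j, inFk k (v i * v j ^+ q).
Variable a : L.
Implicit Types (s : {set 'I_t}) (w : L).

Definition phase w := Tr k (w ^+ (q + 1) / lam) + Trn (a * (w / lam) ^+ q).

Definition phase_set := [set j | phase (v j) != 0].

Lemma phaseD w w' : inFk k (w ^+ q * w') -> phase (w + w') = phase w + phase w'.
Proof.
move=> cross; rewrite /phase normD_inFk // !mulrDl exprD_pow2 // mulrDr !TrD //.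
ring.
Qed.

Lemma phase0 : phase 0 = 0.
Proof.
apply: (addrI (phase 0)); rewrite addr0 -phaseD ?addr0 // mulr0.
exact: inFk0.
Qed.

Lemma phase_bit w : is_bit (phase w).
Proof.
apply: is_bitD => //; last exact: Tr_card_bit.
by apply/(Tr_inFk_bit cardL)/inFkM; [apply: inFk_norm | apply: inFkV].
Qed.

Lemma vsum_cross s s' : inFk k (vsum v s ^+ q * vsum v s').
Proof.
rewrite /vsum expr_pow2_sum // mulr_suml; apply: inFk_sum => // i _.
by rewrite mulr_sumr; apply: inFk_sum => // j _; rewrite mulrC.
Qed.

Lemma phase_vsum s : phase (vsum v s) = \sum_(j in s) phase (v j).
Proof.
suff [] : phase (vsum v s) = \sum_(j in s) phase (v j) /\
  forall j, inFk k (vsum v s ^+ q * v j) by [].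
apply: (big_rec2 (fun y1 y2 => phase y1 = y2 /\ forall j, inFk k (y1 ^+ q * v j))).
  split=> [|j]; first exact: phase0.
  by rewrite expr0n expn_eq0 mul0r; apply: inFk0.
move=> i y1 y2 _ [<- y1_cross]; split.
  by rewrite [v i + y1]addrC (phaseD (y1_cross i)) addrC.
move=> j; rewrite exprD_pow2 // mulrDl; apply: inFkD => //.
by rewrite mulrC.
Qed.

Lemma sgnL_phase_vsum s : sgnL (phase (vsum v s)) = chi s phase_set.
Proof.
rewrite phase_vsum sgnL_sum //; last by move=> j; apply: phase_bit.
by apply: eq_bigr => j _; rewrite inE /sgnL; case: eqP.
Qed.

Lemma normTr_phase s s' (e0 := ((vsum v s + vsum v s') / lam) ^+ q) :
  normTr k lam e0 + Trn ((a + vsum v s') * e0) = phase (vsum v s) + phase (vsum v s').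
Proof.
set w := vsum v s; set w' := vsum v s'.
have lamq : lam ^+ q = lam by apply: inFk_expq.
have norm_e0 : lam * e0 ^+ (q + 1) = w ^+ (q + 1) / lam + w' ^+ (q + 1) / lam.
  have -> : e0 ^+ (q + 1) = ((w + w') / lam) ^+ (q + 1).
    by rewrite /e0 -exprM mulnC exprM; apply/inFk_expq/inFk_norm.
  have lam_norm : lam ^+ (q + 1) = lam * lam by rewrite exprD expr1 lamq.
  rewrite exprMn exprVn lam_norm normD_inFk ?vsum_cross //.
  by field.
have e0E : e0 = (w / lam) ^+ q + (w' / lam) ^+ q by rewrite /e0 mulrDl exprD_pow2.
have Tr_w'e0 : Trn (w' * e0) = 0.
  apply: Tr_inFk => //; rewrite /e0 exprMn exprVn lamq mulrA.
  apply: inFkM; last exact: inFkV.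
  by rewrite exprD_pow2 // mulrDr; apply: inFkD; rewrite // mulrC vsum_cross.
rewrite /normTr norm_e0 mulrDl !TrD // Tr_w'e0 addr0 e0E mulrDr TrD // /phase.
ring.
Qed.

Lemma walsh_normTr_vsum_mul s s' :
  walsh_normTr k lam (a + vsum v s) * walsh_normTr k lam (a + vsum v s') =
  #|L|%:R * (chi s phase_set * chi s' phase_set).
Proof.
rewrite (walsh_normTr_mul cardL lam_Fk lam0 (e0 := ((vsum v s + vsum v s') / lam) ^+ q)).
  by rewrite normTr_phase sgnLD ?phase_bit // !sgnL_phase_vsum.
by rewrite exprqK // mulrC divfK // addrACA addrr_pchar2 // add0r.
Qed.

(* Expanding [eps] in the characters [chi s] turns the twisted sum into a
   combination of the Walsh values [walsh_normTr (a + vsum v s)], whose pairwise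
   products are known up to the signs [chi s phase_set]. *)
Lemma twisted_walsh_sqr (eZ : {set 'I_t} -> int) (eps : L -> int) :
  (forall x, eps x = eZ (tr_support (k + k) v x)) -> (forall Z, eZ Z * eZ Z = 1) ->
  (\sum_x sgnL (normTr k lam x + Trn (a * x)) * eps x) ^+ 2 = #|L|%:R.
Proof.
move=> epsE eZ_sqr; set S := \sum_x _.
pose E s := \sum_Z eZ Z * chi s Z.
have twist s x : sgnL (normTr k lam x + Trn (a * x)) * sgnL (Trn (vsum v s * x)) =
    sgnL (normTr k lam x + Trn ((a + vsum v s) * x)).
  by rewrite -sgnLD ?is_bitD ?normTr_bit ?Tr_card_bit // mulrDl TrD // addrA.
have expand : (2 ^ #|'I_t|)%:R * S = \sum_s E s * walsh_normTr k lam (a + vsum v s).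
  rewrite mulr_sumr.
  under eq_bigr => x _ do rewrite mulrCA epsE -chi_inversion mulr_sumr.
  rewrite exchange_big; apply: eq_bigr => s _; rewrite /walsh_normTr mulr_sumr.
  by apply: eq_bigr => x _; rewrite mulrCA (chi_tr_support cardL) twist.
have : ((2 ^ #|'I_t|)%:R * S) ^+ 2 = (2 ^ #|'I_t|)%:R ^+ 2 * #|L|%:R :> int.
  rewrite expand expr2 big_distrlr /=.
  transitivity (\sum_s \sum_s' #|L|%:R *
      ((E s * chi s phase_set) * (E s' * chi s' phase_set)) : int).
    apply: eq_bigr => s _; apply: eq_bigr => s' _.
    by rewrite mulrACA walsh_normTr_vsum_mul mulrCA mulrACA.
  under eq_bigr do rewrite -mulr_sumr.
  rewrite -mulr_sumr -big_distrlr /= chi_inversion mulrACA eZ_sqr mulr1.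
  by rewrite mulrC expr2.
rewrite exprMn => /mulfI; apply.
by rewrite expf_neq0 // pnatr_eq0 expn_eq0.
Qed.

End TwistedWalsh.

Lemma normr_sqr_pow2 (W : int) (k : nat) :
  W ^+ 2 = (2 ^ (k + k))%:R -> `|W| = (2 ^ k)%:R.
Proof.
move=> W_sqr; apply/eqP; rewrite -(@eqrXn2 _ 2) ?normr_ge0 ?ler0n //.
by rewrite real_normK ?num_real // W_sqr -natrX -expnM muln2 addnn.
Qed.

Lemma inFk_F2L (L : finFieldType) k (c : 'F_2) : inFk k (F2L L c).
Proof. by rewrite /F2L; case: eqP => _; [apply: inFk0 | apply: inFk1]. Qed.

Section Bentness.
Variables (L : finFieldType) (k tau : nat).
Hypothesis cardL : #|L| = (2 ^ (k + k))%N.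
Local Notation q := (2 ^ k)%N.
Let pchar2 := pchar2_card cardL.
Variables (u : 'I_k -> L) (idx : 'I_tau -> 'I_k) (F : {mpoly 'F_2[tau]}).
Hypothesis u_Fk : forall i j : 'I_k, (i < j)%N -> inFk k (u i * u j ^+ q).

Lemma inFk_u_cross i j : inFk k (u i * u j ^+ q).
Proof.
have [ij | ji | /val_inj ->] := ltngtP i j; first exact: u_Fk.
  have /eqP u_ji := u_Fk ji; apply/eqP.
  by rewrite exprMn exprqK // mulrC -u_ji exprMn exprqK // mulrC.
by rewrite -[u j]expr1 -exprD addnC; apply: inFk_norm.
Qed.

Lemma Hfun_inFk x : inFk k (Hfun (k + k) u idx F x).
Proof. by apply: inFkD => //; [apply: inFk_norm | apply: inFk_F2L]. Qed.

Lemma Hfun_vbent : vbent (k + k) k (Hfun (k + k) u idx F).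
Proof.
split=> [|lam lam_Fk lam0]; first exact: Hfun_inFk.
split=> [x | a]; first exact/(Tr_inFk_bit cardL)/inFkM/Hfun_inFk.
pose v j := u (idx j).
pose eZ (Z : {set 'I_tau}) :=
  sgnL (Tr k (lam * F2L L F.@[fun j => if j \in Z then 1 else 0])).
pose eps x := sgnL (Tr k (lam * F2L L F.@[fun j => L2F (Tr (k + k) (v j * x))])).
have epsE x : eps x = eZ (tr_support (k + k) v x).
  rewrite /eps /eZ; congr (sgnL (Tr k (lam * F2L L _))).
  by apply: meval_eq => j; rewrite /L2F inE; case: eqP.
have eZ_sqr Z : eZ Z * eZ Z = 1.
  by rewrite /eZ /sgnL; case: (_ == 0); rewrite ?mulrNN mulr1.
have v_Fk i j : inFk k (v i * v j ^+ q) by apply: inFk_u_cross.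
apply: normr_sqr_pow2; rewrite -cardL.
rewrite -(twisted_walsh_sqr cardL lam_Fk lam0 v_Fk a epsE eZ_sqr).
congr (_ ^+ 2); apply: eq_bigr => x _.
rewrite /Hfun mulrDr TrD // -sgnLD //; first by rewrite addrAC.
  by apply: is_bitD => //; [apply: normTr_bit | apply: Tr_card_bit].
exact/(Tr_inFk_bit cardL)/inFkM/inFk_F2L.
Qed.

End Bentness.

(** * Algebraic normal form of Boolean functions *)

Lemma F2_cases (c : 'F_2) : c = 0 \/ c = 1.
Proof. by case: c => [[|[|//]]] i; [left | right]; apply: val_inj. Qed.

Lemma F2_mulxx (c : 'F_2) : c * c = c.
Proof. by case: (F2_cases c) => ->; rewrite ?mul0r ?mul1r. Qed.

Lemma F2_addxx (c : 'F_2) : c + c = 0.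
Proof. exact/addrr_pchar2/pchar_Fp. Qed.

Lemma morph_add0 (U W : zmodType) (A : U -> W) : {morph A : x y / x + y} -> A 0 = 0.
Proof. by move=> AD; apply: (@addrI _ (A 0)); rewrite -AD !addr0. Qed.

Lemma sum_neq0_summand (R : nmodType) (I : finType) (P : pred I) (F : I -> R) :
  \sum_(i | P i) F i != 0 -> exists2 i, P i & F i != 0.
Proof.
have [i /andP [Pi Fi] _ | none] := pickP (fun i => P i && (F i != 0)).
  by exists i.
by rewrite big1 ?eqxx // => i Pi; have := none i; rewrite Pi => /negbFE/eqP.
Qed.

Section AlgebraicNormalForm.
Variable m : nat.
Local Notation V := 'rV['F_2]_m.
Local Notation coefs := {ffun {set 'I_m} -> 'F_2}.
Implicit Types (S T : {set 'I_m}) (x : V) (a b : coefs) (f g : V -> 'F_2).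

Definition monom S x : 'F_2 := \prod_(i in S) x ord0 i.

Definition anf_eval a x : 'F_2 := \sum_S a S * monom S x.

Definition deg_le f (r : nat) :=
  exists2 a, anf_eval a =1 f & forall S, a S != 0 -> (#|S| <= r)%N.

Lemma monomU S T x : monom S x * monom T x = monom (S :|: T) x.
Proof.
rewrite /monom !(big_mkcond (fun i => i \in _)) -big_split /=; apply: eq_bigr => i _.
by rewrite inE; case: (i \in S); case: (i \in T); rewrite ?mul1r ?mulr1 ?F2_mulxx.
Qed.

Definition indicator S : V := \row_i (i \in S)%:R.

Lemma monom_indicator S T : monom T (indicator S) = (T \subset S)%:R.
Proof.
rewrite /monom; under eq_bigr do rewrite mxE.
have [TS | /subsetPn [i iT iS]] := boolP (T \subset S).
  by rewrite big1 // => i /(subsetP TS) ->.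
by rewrite (bigD1 i) //= (negbTE iS) mul0r.
Qed.

(* Evaluating at the indicator of S isolates a S modulo the proper subsets. *)
Lemma anf_eval_eq0 a : anf_eval a =1 (fun=> 0) -> a = [ffun=> 0].
Proof.
move=> a0; apply/ffunP => S; rewrite ffunE.
elim: {S}_.+1 {-2}S (ltnSn #|S|) => // N IHN S ltSN.
have := a0 (indicator S); rewrite /anf_eval (bigD1 S) //= monom_indicator subxx.
rewrite big1 ?mulr1 ?addr0 // => T TS; rewrite monom_indicator.
have [T_sub_S | ] := boolP (T \subset S); last by rewrite mulr0.
have TpS : T \proper S by rewrite properEneq TS.
by rewrite IHN ?mul0r // (leq_trans (proper_card TpS)).
Qed.

Lemma anf_eval_inj a b : anf_eval a =1 anf_eval b -> a = b.
Proof.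
move=> ab; apply/ffunP => S; apply/eqP; rewrite -subr_eq0.
have /ffunP/(_ S) : [ffun S => a S - b S] = [ffun=> 0].
  apply: anf_eval_eq0 => x; rewrite /anf_eval.
  under eq_bigr do rewrite ffunE mulrBl.
  by rewrite sumrB -/(anf_eval a x) -/(anf_eval b x) ab subrr.
by rewrite !ffunE => ->.
Qed.

(* Existence by counting: [anf_eval] is an injection between sets of the same
   size [2 ^ 2 ^ m]. *)
Lemma anf_exists f : exists a, [forall x, anf_eval a x == f x].
Proof.
pose ev a : {ffun V -> 'F_2} := [ffun x => anf_eval a x].
have ev_inj : injective ev.
  by move=> a b /ffunP ab; apply: anf_eval_inj => x; have := ab x; rewrite !ffunE.
have /codomP [a fa] : [ffun x => f x] \in codom ev.
  apply: inj_card_onto; rewrite // !card_ffun card_mx card_Fp // mul1n.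
  by rewrite card_subsets card_ord.
by exists a; apply/forallP => x; move/ffunP/(_ x): fa; rewrite !ffunE => ->.
Qed.

Definition anf f : coefs := xchoose (anf_exists f).

Lemma anf_evalK f : anf_eval (anf f) =1 f.
Proof. by move=> x; have /forallP/(_ x)/eqP := xchooseP (anf_exists f). Qed.

Lemma anf_unique f a : anf_eval a =1 f -> anf f = a.
Proof. by move=> af; apply: anf_eval_inj => x; rewrite anf_evalK af. Qed.

Lemma deg_le_ext f g r : f =1 g -> deg_le f r -> deg_le g r.
Proof. by move=> fg [a af a_deg]; exists a => // x; rewrite af fg. Qed.

Lemma deg_le_mono f r r' : (r <= r')%N -> deg_le f r -> deg_le f r'.
Proof. by move=> rr' [a af a_deg]; exists a => // S /a_deg/leq_trans; apply. Qed.

Lemma deg_le_const (c : 'F_2) : deg_le (fun=> c) 0.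
Proof.
exists [ffun S => if S == set0 then c else 0] => [x | S].
  rewrite /anf_eval (bigD1 set0) //= ffunE eqxx /monom big_set0 mulr1.
  by rewrite big1 ?addr0 // => S /negbTE S0; rewrite ffunE S0 mul0r.
by rewrite ffunE; case: ifP => [/eqP -> | _]; rewrite ?cards0 ?eqxx.
Qed.

Lemma deg_le_coord (i : 'I_m) : deg_le (fun x => x ord0 i) 1.
Proof.
exists [ffun S => if S == [set i] then 1 else 0] => [x | S].
  rewrite /anf_eval (bigD1 [set i]) //= ffunE eqxx /monom big_set1 mul1r.
  by rewrite big1 ?addr0 // => S /negbTE Si; rewrite ffunE Si mul0r.
by rewrite ffunE; case: ifP => [/eqP -> | _]; rewrite ?cards1 ?eqxx.
Qed.

Lemma deg_leD f g r : deg_le f r -> deg_le g r -> deg_le (fun x => f x + g x) r.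
Proof.
move=> [a af a_deg] [b bg b_deg]; exists [ffun S => a S + b S] => [x | S].
  rewrite /anf_eval; under eq_bigr do rewrite ffunE mulrDl.
  by rewrite big_split -/(anf_eval a x) -/(anf_eval b x) af bg.
rewrite ffunE; have [-> | /a_deg //] := eqVneq (a S) 0.
by rewrite add0r => /b_deg.
Qed.

Lemma deg_leM f g r s : deg_le f r -> deg_le g s ->
  deg_le (fun x => f x * g x) (r + s).
Proof.
move=> [a af a_deg] [b bg b_deg].
exists [ffun U => \sum_S \sum_(T | S :|: T == U) a S * b T] => [x | U].
  rewrite -af -bg /anf_eval mulr_suml.
  under eq_bigr do rewrite ffunE mulr_suml.
  rewrite exchange_big; apply: eq_bigr => S _; rewrite mulr_sumr.
  under eq_bigr => U _ do rewrite big_mkcond mulr_suml.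
  rewrite exchange_big; apply: eq_bigr => T _.
  rewrite (bigD1 (S :|: T)) //= eqxx big1 => [|U /negbTE UST]; last first.
    by rewrite eq_sym UST mul0r.
  by rewrite addr0 mulrACA monomU.
rewrite ffunE => /sum_neq0_summand [S _ /sum_neq0_summand [T /eqP <-]].
rewrite mulf_eq0 negb_or => /andP [/a_deg aS /b_deg bT].
exact: leq_trans (leq_card_setU _ _) (leq_add aS bT).
Qed.

Lemma deg_le_scale (c : 'F_2) f r : deg_le f r -> deg_le (fun x => c * f x) r.
Proof. exact: deg_leM (deg_le_const c). Qed.

Lemma deg_le_sum (I : Type) (s : seq I) (P : pred I) (h : I -> V -> 'F_2) r :
  (forall i, P i -> deg_le (h i) r) ->
  deg_le (fun x => \sum_(i <- s | P i) h i x) r.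
Proof.
move=> h_deg; elim: s => [|i s IHs].
  by apply: deg_le_ext (deg_le_mono _ (deg_le_const 0)) => // x; rewrite big_nil.
case Pi: (P i); last by apply: deg_le_ext IHs => x; rewrite big_cons Pi.
by apply: deg_le_ext (deg_leD (h_deg i Pi) IHs) => x; rewrite big_cons Pi.
Qed.

Lemma deg_le_prod (I : Type) (s : seq I) (P : pred I) (h : I -> V -> 'F_2)
    (r : I -> nat) :
  (forall i, P i -> deg_le (h i) (r i)) ->
  deg_le (fun x => \prod_(i <- s | P i) h i x) (\sum_(i <- s | P i) r i).
Proof.
move=> h_deg; elim: s => [|i s IHs].
  by rewrite big_nil; apply: deg_le_ext (deg_le_const 1) => x; rewrite big_nil.
rewrite big_cons; case Pi: (P i); last by apply: deg_le_ext IHs => x; rewrite big_cons Pi.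
by apply: deg_le_ext (deg_leM (h_deg i Pi) IHs) => x; rewrite big_cons Pi.
Qed.

Lemma deg_le1_affine f : deg_le f 1 -> forall x y, f (x + y) + f x + f y + f 0 = 0.
Proof.
case=> a af a_deg x y; rewrite -!af /anf_eval -!big_split /=.
apply: big1 => S _; rewrite -!mulrDr.
have [-> | /a_deg] := eqVneq (a S) 0; first by rewrite mul0r.
rewrite leq_eqVlt ltnS leqn0 cards_eq0 => /orP [/cards1P [i ->] | /eqP ->].
  rewrite /monom !big_set1 !mxE addr0 [_ + _ + x ord0 i]addrAC F2_addxx add0r.
  by rewrite F2_addxx mulr0.
by rewrite /monom !big_set0 F2_addxx add0r F2_addxx mulr0.
Qed.

End AlgebraicNormalForm.

Lemma row_expand m (W : zmodType) (A : 'rV['F_2]_m -> W) :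
  {morph A : x y / x + y} ->
  forall x, A x = \sum_i (if x ord0 i == 0 then 0 else A (delta_mx 0 i)).
Proof.
move=> AD x; rewrite {1}(row_sum_delta x) (big_morph A AD (morph_add0 AD)).
apply: eq_bigr => i _; case: (F2_cases (x 0 i)) => ->.
  by rewrite scale0r morph_add0 // eqxx.
by rewrite scale1r oner_eq0.
Qed.

Lemma deg_le_additive m (l : 'rV['F_2]_m -> 'F_2) :
  {morph l : x y / x + y} -> deg_le l 1.
Proof.
move=> lD; have := @deg_le_sum m _ (index_enum 'I_m) xpredT
  (fun i x => x ord0 i * l (delta_mx 0 i)) 1
  (fun i _ => deg_leM (deg_le_coord i) (deg_le_const _ _)).
apply: deg_le_ext => x; rewrite (row_expand lD x); apply: eq_bigr => i _.
by case: (F2_cases (x ord0 i)) => ->; rewrite ?mul0r ?mul1r ?eqxx ?oner_eq0.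
Qed.

Lemma deg_le_comp m m' (A : 'rV['F_2]_m' -> 'rV['F_2]_m) (f : 'rV['F_2]_m -> 'F_2) r :
  {morph A : x y / x + y} -> deg_le f r -> deg_le (fun y => f (A y)) r.
Proof.
move=> AD [a af a_deg]; apply: deg_le_ext (fun y => af (A y)) _.
apply: deg_le_sum => S _; have [-> | /a_deg S_deg] := eqVneq (a S) 0.
  by apply: deg_le_ext (deg_le_mono _ (deg_le_const _ 0)) => // y; rewrite mul0r.
apply: deg_le_scale; apply: deg_le_mono S_deg _; rewrite -sum1_card.
by apply: deg_le_prod => i _; apply: deg_le_additive => y z; rewrite AD mxE.
Qed.

Section ReducedPolynomials.
Variable m : nat.
Implicit Types (S : {set 'I_m}) (a : {ffun {set 'I_m} -> 'F_2}).

Definition mnm_of_set S : 'X_{1..m} := [multinom (i \in S : nat) | i < m].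

Lemma mnm_of_setE S i : mnm_of_set S i = (i \in S) :> nat.
Proof. by rewrite mnmE. Qed.

Lemma mnm_of_set_inj : injective mnm_of_set.
Proof.
move=> S T /mnmP ST; apply/setP => i; have := ST i.
by rewrite !mnm_of_setE; case: (i \in S); case: (i \in T).
Qed.

Lemma mdeg_mnm_of_set S : mdeg (mnm_of_set S) = #|S|.
Proof.
rewrite mdegE -sum1_card [RHS]big_mkcond; apply: eq_bigr => i _.
by rewrite mnm_of_setE; case: (i \in S).
Qed.

Definition mpoly_of_anf a : {mpoly 'F_2[m]} := \sum_S a S *: 'X_[mnm_of_set S].

Lemma meval_mpoly_of_anf a (x : 'rV['F_2]_m) :
  (mpoly_of_anf a).@[fun i => x ord0 i] = anf_eval a x.
Proof.
rewrite /mpoly_of_anf (big_morph _ (mevalD _) (meval0 _)); apply: eq_bigr => S _.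
rewrite mevalZ mevalX /monom [in RHS]big_mkcond; congr (_ * _); apply: eq_bigr => i _.
by rewrite mnm_of_setE; case: (i \in S); rewrite ?expr1 ?expr0.
Qed.

Lemma mcoeff_mpoly_of_anf a mo :
  (mpoly_of_anf a)@_mo = \sum_(S | mo == mnm_of_set S) a S.
Proof.
rewrite /mpoly_of_anf (big_morph _ (mcoeffD _) (mcoeff0 _ _)) [RHS]big_mkcond.
apply: eq_bigr => S _; rewrite mcoeffZ mcoeffX eq_sym.
by case: eqP; rewrite ?mulr1 ?mulr0.
Qed.

Lemma msupp_mpoly_of_anf a mo :
  mo \in msupp (mpoly_of_anf a) -> exists2 S, mo = mnm_of_set S & a S != 0.
Proof.
rewrite mcoeff_msupp mcoeff_mpoly_of_anf => /sum_neq0_summand [S /eqP ->].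
by exists S.
Qed.

Lemma mcoeff_mpoly_of_anf_set a S : (mpoly_of_anf a)@_(mnm_of_set S) = a S.
Proof.
rewrite mcoeff_mpoly_of_anf (big_pred1 S) // => T.
by rewrite (inj_eq mnm_of_set_inj) eq_sym.
Qed.

Lemma reduced_mpoly_of_anf a : reduced (mpoly_of_anf a).
Proof.
by move=> _ /msupp_mpoly_of_anf [S -> _] i; rewrite mnm_of_setE; case: (i \in S).
Qed.

Lemma reduced_mpoly_of_anfE (P : {mpoly 'F_2[m]}) :
  reduced P -> P = mpoly_of_anf [ffun S => P@_(mnm_of_set S)].
Proof.
move=> P_red; apply/mpolyP => mo; rewrite mcoeff_mpoly_of_anf.
have [mo_P | mo_P] := boolP (mo \in msupp P).
  have mo_set : mo = mnm_of_set [set i | mo i != 0%N].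
    apply/mnmP => i; rewrite mnm_of_setE inE.
    by have := P_red mo mo_P i; case: (mo i) => [|[]].
  rewrite mo_set (big_pred1 [set i | mo i != 0%N]) ?ffunE // => T.
  by rewrite (inj_eq mnm_of_set_inj) eq_sym.
rewrite big1 => [|S /eqP mo_S]; first by apply/eqP; rewrite mcoeff_eq0.
by apply/eqP; rewrite ffunE -mo_S mcoeff_eq0.
Qed.

Lemma anf_deg_mpoly_of_anf_le a r :
  (anf_deg (mpoly_of_anf a) <= r)%N <-> forall S, a S != 0 -> (#|S| <= r)%N.
Proof.
rewrite /anf_deg -subn1 leq_subLR add1n; split=> [deg_r S aS | a_deg].
  have : mnm_of_set S \in msupp (mpoly_of_anf a).
    by rewrite mcoeff_msupp mcoeff_mpoly_of_anf_set.
  move/msize_mdeg_lt; rewrite mdeg_mnm_of_set => lt_S.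
  by rewrite -ltnS (leq_trans lt_S deg_r).
rewrite msizeE; apply/bigmax_leqP_seq => _ /msupp_mpoly_of_anf [S -> aS] _.
by rewrite mdeg_mnm_of_set ltnS a_deg.
Qed.

End ReducedPolynomials.

Definition bool_deg m (f : 'rV['F_2]_m -> 'F_2) := anf_deg (mpoly_of_anf (anf f)).

Lemma deg_leP m (f : 'rV['F_2]_m -> 'F_2) r : deg_le f r <-> (bool_deg f <= r)%N.
Proof.
rewrite /bool_deg anf_deg_mpoly_of_anf_le; split=> [[a af a_deg] | ].
  by rewrite (anf_unique af).
by exists (anf f) => //; apply: anf_evalK.
Qed.

Lemma bool_algdeg_bool_deg m (f : 'rV['F_2]_m -> 'F_2) : bool_algdeg f (bool_deg f).
Proof.
exists (mpoly_of_anf (anf f)); split; first exact: reduced_mpoly_of_anf.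
by split=> // x; rewrite meval_mpoly_of_anf anf_evalK.
Qed.

(** * Algebraic degree of H *)

Lemma additive_F2L (L : finFieldType) (A : L -> 'F_2) (c : 'F_2) (y : L) :
  {morph A : a b / a + b} -> A (F2L L c * y) = c * A y.
Proof.
move=> AD; rewrite /F2L; case: (F2_cases c) => ->; last by rewrite oner_eq0 !mul1r.
by rewrite eqxx !mul0r morph_add0.
Qed.

Lemma F2L_expr_pow2 (L : finFieldType) (c : 'F_2) m : F2L L c ^+ (2 ^ m) = F2L L c.
Proof. by rewrite /F2L; case: eqP => _; rewrite ?expr0n ?expn_eq0 ?expr1n. Qed.

Lemma anf_deg_reduced_le m (P : {mpoly 'F_2[m]}) : reduced P -> (anf_deg P <= m)%N.
Proof.
move/reduced_mpoly_of_anfE ->; apply/anf_deg_mpoly_of_anf_le => S _.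
by rewrite (leq_trans (max_card _)) ?card_ord.
Qed.

Section AlgebraicDegree.
Variables (L : finFieldType) (k tau : nat).
Hypothesis cardL : #|L| = (2 ^ (k + k))%N.
Local Notation q := (2 ^ k)%N.
Local Notation n := (k + k).
Let pchar2 := pchar2_card cardL.
Variables (u : 'I_k -> L) (idx : 'I_tau -> 'I_k) (F : {mpoly 'F_2[tau]}).
Hypotheses (F_red : reduced F) (v_indep : F2_lin_indep (fun j => u (idx j))).
Variables (phi : 'rV['F_2]_n -> L) (psi : L -> 'rV['F_2]_k).
Hypotheses (phiD : {morph phi : a b / a + b}) (phi_bij : bijective phi).
Hypotheses (psiD : {morph psi : a b / a + b}) (psi_inj : {in inFk k &, injective psi}).
Hypothesis psi_surj : forall w, exists2 y, inFk k y & psi y = w.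
Local Notation d := (anf_deg F).
Local Notation v := (fun j => u (idx j)).
Implicit Types (x : 'rV['F_2]_n) (y : L) (j : 'I_k).

Definition coord j y := psi y ord0 j.

Definition Hcoord j x := coord j (Hfun n u idx F (phi x)).

Definition Ncoord j x := coord j (phi x ^+ (q + 1)).

Definition Feval (z : 'rV['F_2]_tau) := F.@[fun i => z ord0 i].

Definition tr_coords x : 'rV['F_2]_tau := \row_i L2F (Tr n (v i * phi x)).

Lemma coordD j : {morph coord j : a b / a + b}.
Proof. by move=> a b; rewrite /coord psiD mxE. Qed.

Lemma Hcoord_decomp j x : Hcoord j x = Ncoord j x + Feval (tr_coords x) * coord j 1.
Proof.
rewrite /Hcoord /Hfun coordD -[F2L L _]mulr1 (additive_F2L _ _ (coordD j)).
congr (_ + _ * _).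
by apply: meval_eq => i; rewrite mxE.
Qed.

Lemma deg_le_Ncoord j : deg_le (Ncoord j) 2.
Proof.
pose e i := phi (delta_mx 0 i).
have phiE x : phi x = \sum_i F2L L (x ord0 i) * e i.
  rewrite (row_expand phiD x); apply: eq_bigr => i _.
  by rewrite /F2L; case: eqP; rewrite ?mul0r ?mul1r.
have NcoordE x : Ncoord j x =
    \sum_i \sum_i' x ord0 i * (x ord0 i' * coord j (e i ^+ q * e i')).
  rewrite /Ncoord exprD expr1 phiE expr_pow2_sum // big_distrlr /=.
  rewrite (big_morph _ (coordD j) (morph_add0 (coordD j))); apply: eq_bigr => i _.
  rewrite (big_morph _ (coordD j) (morph_add0 (coordD j))); apply: eq_bigr => i' _.
  rewrite exprMn F2L_expr_pow2 mulrACA -mulrA.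
  by rewrite !(additive_F2L _ _ (coordD j)).
apply: deg_le_ext (fun x => esym (NcoordE x)) _.
apply: deg_le_sum => i _; apply: deg_le_sum => i' _.
exact: deg_leM (deg_le_coord i) (deg_leM (deg_le_coord i') (deg_le_const _ _)).
Qed.

Lemma tr_coordsD : {morph tr_coords : a b / a + b}.
Proof.
move=> a b; apply/rowP => i; rewrite !mxE phiD mulrDr TrD // L2FD //;
  exact: Tr_card_bit.
Qed.

Lemma deg_le_Feval r : deg_le Feval r <-> (d <= r)%N.
Proof.
have anfE : anf Feval = [ffun S => F@_(mnm_of_set S)].
  by apply: anf_unique => z; rewrite -meval_mpoly_of_anf -reduced_mpoly_of_anfE.
by rewrite deg_leP /bool_deg anfE -reduced_mpoly_of_anfE.
Qed.

Lemma tr_coords_section :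
  exists2 R : 'rV['F_2]_tau -> 'rV['F_2]_n, {morph R : a b / a + b} & cancel R tr_coords.
Proof.
have [y y_supp] := fin_all_exists (fun i => tr_support_surj cardL v_indep [set i]).
have [phi' phiK phi'K] := phi_bij.
exists (fun z => \sum_i z ord0 i *: phi' (y i)) => [a b | z].
  by rewrite -big_split; apply: eq_bigr => i _; rewrite mxE scalerDl.
have tr_coordsZ c x : tr_coords (c *: x) = c *: tr_coords x.
  case: (F2_cases c) => ->; last by rewrite !scale1r.
  by rewrite !scale0r morph_add0 //; apply: tr_coordsD.
rewrite (big_morph _ tr_coordsD (morph_add0 tr_coordsD)) [RHS]row_sum_delta.
apply: eq_bigr => i _; rewrite tr_coordsZ; congr (_ *: _); apply/rowP => i'.
rewrite !mxE phi'K; move/setP/(_ i'): (y_supp i); rewrite !inE /L2F eq_sym.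
by case: eqP => _ <-.
Qed.

Lemma deg_le_Feval_tr r : deg_le (fun x => Feval (tr_coords x)) r <-> (d <= r)%N.
Proof.
rewrite -deg_le_Feval; split; last exact: deg_le_comp tr_coordsD.
have [R RD RK] := tr_coords_section.
by move/(deg_le_comp RD); apply: deg_le_ext => z; rewrite RK.
Qed.

Lemma exists_coord1 : exists j, coord j 1 = 1.
Proof.
have psi1 : psi 1 != 0.
  apply: contraNneq (oner_neq0 L) => psi10; apply/eqP/psi_inj; rewrite ?inE.
  - exact: inFk1.
  - exact: inFk0.
  by rewrite psi10 morph_add0.
have [j /= psi1j | none] := pickP (fun j => coord j 1 != 0).
  by exists j; case: (F2_cases (coord j 1)) psi1j => ->; rewrite ?eqxx.
case/eqP: psi1; apply/rowP => j; rewrite mxE.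
by have := none j; rewrite /coord => /negbFE/eqP.
Qed.

(* The F-part cancels in [Hcoord j1 + coord j1 1 * Hcoord j0], leaving a linear
   image of the norm, whose second derivative [y^q z + y z^q] is nonzero. *)
Lemma exists_Hcoord_nonaffine : (1 < k)%N -> exists j, (1 < bool_deg (Hcoord j))%N.
Proof.
move=> k_gt1; have [j0 coord_j0] := exists_coord1.
have [j1 j1j0] : exists j1 : 'I_k, j1 != j0.
  have [j0_0 | j0_n0] := eqVneq (val j0) 0%N.
    by exists (Ordinal k_gt1); rewrite -val_eqE j0_0.
  by exists (Ordinal (ltnW k_gt1)); rewrite -val_eqE eq_sym.
have [j /= | affine] := pickP (fun j => 1 < bool_deg (Hcoord j))%N; first by exists j.
have Hcoord_aff j : deg_le (Hcoord j) 1 by apply/deg_leP; rewrite leqNgt affine.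
pose rho y := coord j1 y + coord j1 1 * coord j0 y.
have rhoD : {morph rho : a b / a + b}.
  by move=> a b; rewrite /rho !coordD mulrDr addrACA.
pose h x := Hcoord j1 x + coord j1 1 * Hcoord j0 x.
have h_aff : deg_le h 1 := deg_leD (Hcoord_aff j1) (deg_le_scale _ (Hcoord_aff j0)).
have hE x : h x = rho (phi x ^+ (q + 1)).
  rewrite /h !Hcoord_decomp coord_j0 mulr1 /rho /Ncoord.
  set A := coord j1 _; set B := coord j0 _; set G := Feval _; set P := coord j1 1.
  have -> : A + G * P + P * (B + G) = A + P * B + (G * P + G * P) by ring.
  by rewrite F2_addxx addr0.
have [w w_Fk psi_w] := psi_surj (delta_mx 0 j1).
have [th th_rel] := exists_relTr1 cardL.
have [phi' phiK phi'K] := phi_bij.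
have := deg_le1_affine h_aff (phi' (w * th)) (phi' 1).
rewrite !hE phiD !phi'K morph_add0 // -!rhoD [0 ^+ _]expr0n addn_eq0 andbF addr0.
rewrite norm_polar //.
rewrite expr1n !mulr1 exprMn (inFk_expq w_Fk) -mulrDr th_rel mulr1.
rewrite /rho /coord psi_w !mxE !eqxx eq_sym (negbTE j1j0) mulr0 addr0 => /eqP.
by rewrite oner_eq0.
Qed.

Lemma Hcoord_deg_le j : (2 <= d)%N -> deg_le (Hcoord j) d.
Proof.
move=> d_ge2; apply: deg_le_ext (fun x => esym (Hcoord_decomp j x)) _.
apply: deg_leD; first exact: deg_le_mono d_ge2 (deg_le_Ncoord j).
by rewrite -[d]addn0; apply: deg_leM (deg_le_const _ _); apply/deg_le_Feval_tr.
Qed.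

Lemma exists_Hcoord_deg_ge : (2 <= d)%N -> (tau <= k)%N ->
  exists j, (d <= bool_deg (Hcoord j))%N.
Proof.
move=> d_ge2 tau_le_k; have [d_le2 | d_gt2] := leqP d 2.
  have k_gt1 : (1 < k)%N.
    by rewrite (leq_trans d_ge2) // (leq_trans (anf_deg_reduced_le F_red)).
  have [j Hj] := exists_Hcoord_nonaffine k_gt1.
  by exists j; rewrite (leq_trans d_le2).
have [j0 coord_j0] := exists_coord1; exists j0; rewrite leqNgt.
have d_gt0 : (0 < d)%N by rewrite (leq_trans _ d_gt2).
apply/negP => Hj0_lt; have Hj0 : deg_le (Hcoord j0) d.-1.
  by apply/deg_leP; rewrite -ltnS prednK.
suff /deg_le_Feval_tr : deg_le (fun x => Feval (tr_coords x)) d.-1.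
  by rewrite leqNgt ltn_predL d_gt0.
apply: deg_le_ext (deg_leD Hj0 (deg_le_mono _ (deg_le_Ncoord j0))) => [x|].
  by rewrite Hcoord_decomp coord_j0 mulr1 addrAC F2_addxx add0r.
by rewrite -ltnS prednK.
Qed.

Lemma Hcoord_degrees : (2 <= d)%N -> (tau <= k)%N ->
  exists D : 'I_k -> nat,
    (forall j, bool_algdeg (Hcoord j) (D j)) /\ \max_(j < k) D j = d.
Proof.
move=> d_ge2 tau_le_k; exists (fun j => bool_deg (Hcoord j)).
split=> [j | ]; first exact: bool_algdeg_bool_deg.
apply/eqP; rewrite eqn_leq; apply/andP; split.
  by apply/bigmax_leqP => j _; apply/deg_leP/Hcoord_deg_le.
have [j dj] := exists_Hcoord_deg_ge d_ge2 tau_le_k.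
exact: leq_trans dj (leq_bigmax j).
Qed.

End AlgebraicDegree.

Unset Implicit Arguments.

Theorem theorem5 (n k tau : nat) (L : finFieldType) (u : 'I_k -> L)
  (idx : 'I_tau -> 'I_k) (F : {mpoly 'F_2[tau]}) (d : nat) :
  n = (2 * k)%N ->
  #|L| = (2 ^ n)%N ->
  (1 <= tau <= k)%N ->
  injective u ->
  (forall i j : 'I_k, (i < j)%N ->
     inFk k (u i * u j ^+ (2 ^ k)) /\ u i * u j ^+ (2 ^ k) != 0) ->
  injective idx ->
  reduced F ->
  anf_deg F = d ->
  vbent n k (Hfun n u idx F) /\
  (F2_lin_indep (fun j => u (idx j)) -> (2 <= d)%N ->
     vec_algdeg n k (Hfun n u idx F) d).
Proof.
move=> -> cardL /andP [_ tau_le_k] _ u_Fk _ F_red <-.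
rewrite mul2n -addnn in cardL *.
split; first by apply: Hfun_vbent cardL _ _ _ (fun i j ij => (u_Fk i j ij).1).
move=> v_indep d_ge2 phi psi phiD phi_bij psiD psi_inj psi_surj.
exact: Hcoord_degrees.
Qed.
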